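(* For $1\le i\le m$ let $V^m_i$ be the $m\times m$ matrix whose $k$-th column is $(1,x_k,x_k^2,\dots,x_k^{m-i},y_k,y_k^2,\dots,y_k^{i-1})^T$. Then on $U^m_B$, for $1\le i\le m-1$, $$\sigma^y_m\det(V^m_i)=\pm\,t^{m-i}\det(V^m_{i+1}).$$ Consequently, with $G_1=\prod_{1\le a<b\le m}(x_a-x_b)$ and $G_i=\dfrac{(\sigma^y_m)^{i-1}}{t^{(i-1)(m-i/2)}}G_1$ for $2\le i\le m$, one has $G_i=\pm\det V^m_i$ for all $i$; in particular each $G_i$ is a regular function on $U^m_B$, $G_m=\pm\prod_{a<b}(y_a-y_b)$, and $\sigma^x_{m-i}G_{i+1}=\sigma^y_iG_i$ for $1\le i\le m-1$.
   Context: Local model: $B$ is an irreducible base with a regular function $t$, $U=\{xy=t\}\subset\mathbb A^2\times B$, and $U^m_B\subset\mathbb A^{2m}\times B$ is given by $x_1y_1=\dots=x_my_m=t$. $\sigma^x_i,\sigma^y_i$ are the elementary symmetric functions of the $x_k$, resp. the $y_k$. *)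

From HB Require Import structures.
From mathcomp Require Import all_boot all_order all_algebra.
Unset Printing Implicit Defensive.
Import Order.TTheory GRing.Theory Num.Theory.
Local Open Scope ring_scope.

Definition elsym (R : comPzRingType) (m j : nat) (z : 'I_m -> R) : R :=
  \sum_(A : {set 'I_m} | #|A| == j) \prod_(k in A) z k.
Arguments elsym {R} m j z.

Definition Vmat (R : comPzRingType) (m i : nat) (x y : 'I_m -> R) : 'M[R]_m :=
  \matrix_(r < m, k < m)
    if (r <= m - i)%N then x k ^+ r else y k ^+ (r - (m - i))%N.
Arguments Vmat {R} m i x y.

Definition vdprod (R : comPzRingType) (m : nat) (z : 'I_m -> R) : R :=
  \prod_(a < m) \prod_(b < m | (a < b)%N) (z a - z b).
Arguments vdprod {R} m z.

(* G_i = (sigma^y_m)^(i-1) / t^((i-1)(m - i/2)) * G_1, with G_1 = vdprod x.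
   Note (i-1)(m - i/2) = (i-1)(2m-i)/2, which is an integer. *)
Definition Gfun (R : comUnitRingType) (m i : nat) (t : R) (x y : 'I_m -> R) : R :=
  (elsym m m y) ^+ i.-1 / t ^+ ((i.-1 * (2 * m - i)) %/ 2)%N * vdprod m x.
Arguments Gfun {R} m i t x y.

From HB Require Import structures.
From mathcomp Require Import all_boot all_order all_algebra perm zify ring.
Import Order.TTheory GRing.Theory Num.Theory.
Local Open Scope ring_scope.

(* Multiplying the k-th column of V^m_i by y_k turns the top row (1) into
   y_k, each row x_k^r with 1 <= r <= m-i into x_k^r y_k = t x_k^(r-1), and
   each row y_k^j into y_k^(j+1).  Up to a cyclic permutation of the first
   m-i+1 rows and the factor t on m-i of them, this is V^m_(i+1); taking
   determinants gives  sigma^y_m det V_i = +- t^(m-i) det V_(i+1)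
   (det_Vmat_step), since sigma^y_m = prod_k y_k.  Iterating from
   V_1 = Vandermonde(x) yields (sigma^y_m)^(i-1) det V_1 = +- t^e_i det V_i
   with e_i = (i-1)(2m-i)/2, which identifies G_i with +- det V_i; for i = m,
   V_m = Vandermonde(y).  Finally, since x_k y_k = t, multiplying sigma^x_j
   by sigma^y_m = prod_k y_k gives t^j sigma^y_(m-j) (elsym_complement),
   which yields the recursion  sigma^x_(m-i) G_(i+1) = sigma^y_i G_i. *)

Definition Gexp (m i : nat) : nat := (i.-1 * (2 * m - i)) %/ 2.

Lemma Gexp_succ m i : (0 < i)%N -> (i < m)%N -> Gexp m i.+1 = (Gexp m i + (m - i))%N.
Proof.
case: i => [|i] // _ lt_im; rewrite /Gexp /=.
have -> : (i.+1 * (2 * m - i.+2) = (m - i.+1) * 2 + i * (2 * m - i.+1))%N by nia.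
by rewrite divnMDl // addnC.
Qed.

Lemma elsym_full (R : comPzRingType) m (z : 'I_m -> R) :
  elsym m m z = \prod_k z k.
Proof.
rewrite /elsym (big_pred1 setT) => [|A /=]; first by apply: eq_bigl => k; rewrite in_setT.
rewrite eqEcard subsetT cardsT card_ord /= eqn_leq.
by have := max_card (pred_of_set A); rewrite card_ord => ->.
Qed.

(* If x_k y_k = t for all k, then sigma^y_m sigma^x_j = t^j sigma^y_(m-j):
   pair each j-subset A with its complement. *)
Lemma elsym_complement {R : comPzRingType} {m} {t : R} {x y : 'I_m -> R} j :
  (forall k, x k * y k = t) -> (j <= m)%N ->
  elsym m m y * elsym m j x = t ^+ j * elsym m (m - j) y.
Proof.
move=> xyE le_jm; rewrite elsym_full /elsym !mulr_sumr.
rewrite [RHS](reindex_inj (@setC_inj _)) /=.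
apply: eq_big => [A | A /eqP cardA].
  have := cardsC A; rewrite card_ord; move: #|A| #|~: A| => a b sum_ab.
  by apply/eqP/eqP; lia.
rewrite [\prod_(k < m) y k](bigID (mem A)) /= mulrAC -big_split /=.
under eq_bigr do rewrite mulrC xyE.
by rewrite prodr_const cardA; congr (_ * _); apply: eq_bigl => k; rewrite !inE.
Qed.

Definition pair_count (m : nat) : nat :=
  \sum_(a < m) #|[pred b : 'I_m | (a < b)%N]|.

Lemma vdprod_Vandermonde (R : comPzRingType) m (z : 'I_m -> R) :
  vdprod m z = (-1) ^+ pair_count m * \det (Vandermonde m (\row_k z k)).
Proof.
rewrite det_Vandermonde /vdprod /pair_count -prodrXr -big_split /=.
apply: eq_bigr => a _; rewrite -prodrN.
by apply: eq_big => [b | b _]; rewrite ?inE ?mxE ?opprB.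
Qed.

Lemma Vmat_first (R : comPzRingType) m (x y : 'I_m -> R) :
  Vmat m 1 x y = Vandermonde m (\row_k x k).
Proof.
apply/matrixP => r k; rewrite !mxE.
by have -> : (r <= m - 1)%N by have := ltn_ord r; lia.
Qed.

Lemma Vmat_last (R : comPzRingType) m (x y : 'I_m -> R) :
  Vmat m m x y = Vandermonde m (\row_k y k).
Proof.
apply/matrixP => r k; rewrite !mxE subnn subn0.
by case: r => [[|r] lt_rm]; rewrite ?expr0.
Qed.

Lemma det_rescaled_rows {R : comPzRingType} {n} {A B : 'M[R]_n}
    {c d : 'I_n -> R} {s : 'S_n} :
  (forall r k, A r k * d k = c r * B (s r) k) ->
  \det A * \prod_k d k = (-1) ^+ s * \prod_r c r * \det B.
Proof.
move=> ABE.
have eAB : A *m diag_mx (\row_k d k) = diag_mx (\row_r c r) *m row_perm s B.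
  by apply/matrixP => r k; rewrite mul_mx_diag mul_diag_mx !mxE ABE.
move/(congr1 determinant): eAB.
rewrite !det_mulmx !det_diag row_permE det_mulmx det_perm.
under eq_bigr do rewrite mxE.
under [in RHS]eq_bigr do rewrite mxE.
by move=> ->; rewrite mulrCA mulrA.
Qed.

Definition cycle_down (c r : nat) : nat :=
  if r == 0%N then c else if (r <= c)%N then r.-1 else r.

Lemma cycle_down_inj c : injective (cycle_down c).
Proof. by move=> r1 r2; rewrite /cycle_down; do !case: ifP; lia. Qed.

Lemma cycle_down_lt {m c} (r : 'I_m) : (c < m)%N -> (cycle_down c r < m)%N.
Proof. by have := ltn_ord r; rewrite /cycle_down; do !case: ifP; lia. Qed.

Definition cycle_ord {m c} (lt_cm : (c < m)%N) (r : 'I_m) : 'I_m :=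
  Ordinal (cycle_down_lt r lt_cm).

Lemma cycle_ord_inj {m c} (lt_cm : (c < m)%N) : injective (cycle_ord lt_cm).
Proof. by move=> r1 r2 /(congr1 val) /cycle_down_inj /val_inj. Qed.

Definition cycle_perm {m c} (lt_cm : (c < m)%N) : 'S_m := perm (cycle_ord_inj lt_cm).

(* Entrywise form of V_i diag(y) = diag(t on rows 1..m-i) P V_(i+1). *)
Lemma Vmat_step_entry {R : comPzRingType} {m i} {t : R} {x y : 'I_m -> R}
    (lt_cm : (m - i < m)%N) :
  (forall k, x k * y k = t) -> (i < m)%N -> forall r k,
  Vmat m i x y r k * y k
    = (if (1 <= r <= m - i)%N then t else 1)
      * Vmat m i.+1 x y (cycle_perm lt_cm r) k.
Proof.
move=> xyE lt_im r k; rewrite !mxE permE /= /cycle_down.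
have := ltn_ord r; case: (altP (r =P 0%N :> nat)) => [-> | r_gt0] lt_rm /=.
  have -> : (m - i <= m - i.+1)%N = false by lia.
  have -> : (m - i - (m - i.+1) = 1)%N by lia.
  by rewrite !(mul1r, expr0, expr1).
have r_pos : (0 < r)%N by lia.
rewrite r_pos.
case: (leqP r (m - i)) => [le_ri | lt_ir] /=.
  have -> : (r.-1 <= m - i.+1)%N by lia.
  by rewrite -[in LHS](prednK r_pos) exprS mulrAC xyE.
have -> : (r <= m - i.+1)%N = false by lia.
by rewrite mul1r -exprSr; congr (_ ^+ _); lia.
Qed.

Lemma prod_row_factors (R : comPzRingType) m c (t : R) : (c < m)%N ->
  \prod_(r < m) (if (1 <= r <= c)%N then t else 1) = t ^+ c.
Proof.
move=> lt_cm.
rewrite -(big_mkord xpredT (fun r => if (1 <= r <= c)%N then t else 1)).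
have m_pos : (0 < m)%N by lia.
rewrite (big_cat_nat _ (n := 1)) //= (@big_cat_nat _ _ _ c.+1 1 m) //= big_nat1 mul1r.
rewrite (eq_big_nat _ _ (m := 1) (n := c.+1) (F2 := fun _ => t)); last first.
  by move=> r /andP[-> lt_rc]; rewrite -ltnS lt_rc.
rewrite (eq_big_nat _ _ (m := c.+1) (n := m) (F2 := fun _ => 1)); last first.
  by move=> r /andP[lt_cr _]; rewrite (leqNgt r c) lt_cr andbF.
by rewrite prodr_const_nat expr1n mulr1 prodr_const_nat subn1.
Qed.

Lemma det_Vmat_step m i : (1 <= i < m)%N -> exists s : bool,
  forall (R : comPzRingType) (t : R) (x y : 'I_m -> R), (forall k, x k * y k = t) ->
  elsym m m y * \det (Vmat m i x y) = (-1) ^+ s * t ^+ (m - i) * \det (Vmat m i.+1 x y).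
Proof.
move=> /andP[ge_i1 lt_im]; have lt_cm : (m - i < m)%N by lia.
exists (cycle_perm lt_cm) => R t x y xyE.
rewrite elsym_full mulrC (det_rescaled_rows (Vmat_step_entry lt_cm xyE lt_im)).
by rewrite prod_row_factors.
Qed.

Lemma det_Vmat_iter m i : (1 <= i <= m)%N -> exists s : bool,
  forall (R : comPzRingType) (t : R) (x y : 'I_m -> R), (forall k, x k * y k = t) ->
  elsym m m y ^+ i.-1 * \det (Vmat m 1 x y)
    = (-1) ^+ s * t ^+ Gexp m i * \det (Vmat m i x y).
Proof.
elim: i => [|i IH] //; case: (posnP i) => [-> _ | i_gt0 /andP[_ lt_im]].
  by exists false => R t x y _; rewrite /Gexp /= div0n !expr0 !mul1r.
have [|s1 IHE] := IH; first by rewrite i_gt0 ltnW.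
have [|s2 stepE] := det_Vmat_step m i; first by rewrite i_gt0.
exists (s1 (+) s2) => R t x y xyE.
rewrite Gexp_succ //= -{1}(prednK i_gt0) exprS -mulrA.
rewrite (IHE R t x y xyE) mulrCA (stepE R t x y xyE) signr_addb exprD.
by rewrite -!mulrA; congr (_ * _); rewrite mulrCA.
Qed.

Lemma Gfun_cleared (R : comUnitRingType) m i (t : R) (x y : 'I_m -> R) :
  t \is a GRing.unit ->
  Gfun m i t x y * t ^+ Gexp m i = elsym m m y ^+ i.-1 * vdprod m x.
Proof. by move=> t_unit; rewrite /Gfun /Gexp mulrAC divrK // unitrX. Qed.

Lemma Gfun_det m i : (1 <= i <= m)%N -> exists s : bool,
  forall (R : comUnitRingType) (t : R) (x y : 'I_m -> R),
  (forall k, x k * y k = t) -> t \is a GRing.unit ->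
  Gfun m i t x y = (-1) ^+ s * \det (Vmat m i x y).
Proof.
move=> le_1im; have [s iterE] := det_Vmat_iter m i le_1im.
exists (odd (pair_count m) (+) s) => R t x y xyE t_unit.
apply: (mulIr (unitrX (Gexp m i) t_unit)); rewrite Gfun_cleared //.
rewrite vdprod_Vandermonde -(Vmat_first _ _ x y) mulrCA (iterE R t x y xyE) signr_addb signr_odd.
by rewrite -!mulrA; congr (_ * (_ * _)); rewrite mulrC.
Qed.

(* Fourth claim: sigma^x_(m-i) G_(i+1) = sigma^y_i G_i.  Clearing the
   denominator t^(e_(i+1)) = t^(e_i) t^(m-i), this is elsym_complement
   multiplied by (sigma^y_m)^(i-1) G_1. *)
Lemma Gfun_recursion (R : comUnitRingType) m i (t : R) (x y : 'I_m -> R) :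
  (forall k, x k * y k = t) -> t \is a GRing.unit -> (0 < i)%N -> (i < m)%N ->
  elsym m (m - i) x * Gfun m i.+1 t x y = elsym m i y * Gfun m i t x y.
Proof.
move=> xyE t_unit i_gt0 lt_im.
have complE := elsym_complement (m - i) xyE (leq_subr i m).
rewrite (subKn (ltnW lt_im)) in complE.
have powE : elsym m m y ^+ i = elsym m m y ^+ i.-1 * elsym m m y.
  by rewrite -exprSr prednK.
apply: (mulIr (unitrX (Gexp m i.+1) t_unit)).
rewrite -mulrA Gfun_cleared // Gexp_succ // exprD mulrA.
rewrite -(mulrA _ (Gfun _ _ _ _ _)) Gfun_cleared // powE.
transitivity (elsym m m y ^+ i.-1 * (elsym m m y * elsym m (m - i) x) * vdprod m x).
  by ring.
by rewrite complE; ring.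
Qed.

Theorem mainTheorem3 (m : nat) (hm : (1 <= m)%N) :
  (* sigma^y_m det V_i = +- t^(m-i) det V_(i+1) on U^m_B, 1 <= i <= m-1 *)
  (forall i : nat, (1 <= i <= m.-1)%N ->
     exists s : bool, forall (R : comPzRingType) (t : R) (x y : 'I_m -> R),
       (forall k, x k * y k = t) ->
       elsym m m y * \det (Vmat m i x y)
         = (-1) ^+ s * t ^+ (m - i) * \det (Vmat m i.+1 x y))
  /\
  (* G_i = +- det V_i, 1 <= i <= m (where G_i is defined, i.e. t invertible) *)
  (forall i : nat, (1 <= i <= m)%N ->
     exists s : bool, forall (R : comUnitRingType) (t : R) (x y : 'I_m -> R),
       (forall k, x k * y k = t) -> t \is a GRing.unit ->
       Gfun m i t x y = (-1) ^+ s * \det (Vmat m i x y))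
  /\
  (* G_m = +- prod_{a<b} (y_a - y_b) *)
  (exists s : bool, forall (R : comUnitRingType) (t : R) (x y : 'I_m -> R),
       (forall k, x k * y k = t) -> t \is a GRing.unit ->
       Gfun m m t x y = (-1) ^+ s * vdprod m y)
  /\
  (* sigma^x_(m-i) G_(i+1) = sigma^y_i G_i, 1 <= i <= m-1 *)
  (forall i : nat, (1 <= i <= m.-1)%N ->
     forall (R : comUnitRingType) (t : R) (x y : 'I_m -> R),
       (forall k, x k * y k = t) -> t \is a GRing.unit ->
       elsym m (m - i) x * Gfun m i.+1 t x y = elsym m i y * Gfun m i t x y).
Proof.
split; [|split; [exact: Gfun_det | split]].
- by move=> i /andP[ge_i1 le_im]; apply: det_Vmat_step; lia.
- have [|s detE] := Gfun_det m m; first by rewrite hm leqnn.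
  exists (s (+) odd (pair_count m)) => R t x y xyE t_unit.
  by rewrite detE // Vmat_last vdprod_Vandermonde signr_addb signr_odd -mulrA signrMK.
move=> i /andP[ge_i1 le_im] R t x y xyE t_unit.
by apply: Gfun_recursion => //; lia.
Qed.
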